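(* Let $\omega\in(0,\pi/2]$ and let $K$ be a cap with rotation angle $\omega$. The following are equivalent: (1) $\mathcal{N}(K)\subseteq K$; (2) $\mathcal{N}(K)\subseteq K\setminus\delta K$; (3) for every $t\in[0,\omega]$, either $\mathbf{x}_K(t)\notin F_\omega^\circ$ or $\mathbf{x}_K(t)\in K$; (4) the set $K\setminus\mathcal{N}(K)$ is connected.
   Context: For $t\in\mathbb{R}$ let $u_t=(\cos t,\sin t)$, $v_t=(-\sin t,\cos t)$. For nonempty compact $K$, $p_K(t)=\max_{p\in K}p\cdot u_t$; $H(t,h)=\{p:p\cdot u_t\le h\}$; the edge $e_K(t)=\{p\in K: p\cdot u_t=p_K(t)\}$. With $J_\omega=[0,\omega]\cup[\pi/2,\pi/2+\omega]$, a cap with rotation angle $\omega$ is a nonempty compact convex $K\subset\mathbb{R}^2$ with $p_K(\omega)=p_K(\pi/2)=1$, $p_K(\pi+\omega)=p_K(3\pi/2)=0$, which is an intersection of closed half-planes $H(t,h)$ with $t\in J_\omega\cup\{\pi+\omega,3\pi/2\}$. Its upper boundary is $\delta K=\bigcup_{t\in[0,\omega+\pi/2]}e_K(t)$. Fan $F_\omega=\{(x,y):y\ge0,\ x\cos\omega+y\sin\omega\ge0\}$, with interior $F_\omega^\circ$. For $t\in[0,\omega]$: $\mathbf{x}_K(t)=(p_K(t)-1)u_t+(p_K(t+\pi/2)-1)v_t$ and $Q_K^-(t)=\{p:p\cdot u_t<p_K(t)-1,\ p\cdot v_t<p_K(t+\pi/2)-1\}$. Niche $\mathcal{N}(K)=F_\omega\cap\bigcup_{0\le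 t\le\omega}Q_K^-(t)$. *)

From HB Require Import structures.
From mathcomp Require Import all_boot all_order all_algebra.
From mathcomp Require Import all_classical all_reals all_analysis.
Set Implicit Arguments. Unset Strict Implicit. Unset Printing Implicit Defensive.
Import Order.TTheory GRing.Theory Num.Theory numFieldNormedType.Exports.
Local Open Scope classical_set_scope.
Local Open Scope ring_scope.

Section Cap.
Variable R : realType.
Notation pt := (R * R)%type.

Definition dotp (p q : pt) : R := p.1 * q.1 + p.2 * q.2.
Definition u_ (t : R) : pt := (cos t, sin t).
Definition v_ (t : R) : pt := (- sin t, cos t).

Definition pK (K : set pt) (t : R) : R := sup [set dotp p (u_ t) | p in K].

Definition halfplane (t h : R) : set pt := [set p | dotp p (u_ t) <= h].

Definition edge (K : set pt) (t : R) : set pt :=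
  [set p | K p /\ dotp p (u_ t) = pK K t].

Definition Jset (w : R) : set R :=
  `[0, w]%classic `|` `[pi / 2, pi / 2 + w]%classic.

Definition convex2 (K : set pt) : Prop :=
  forall p q (l : R), K p -> K q -> 0 <= l <= 1 ->
    K ((1 - l) * p.1 + l * q.1, (1 - l) * p.2 + l * q.2).

Definition is_cap (w : R) (K : set pt) : Prop :=
  [/\ K !=set0, compact K, convex2 K,
      [/\ pK K w = 1, pK K (pi / 2) = 1, pK K (pi + w) = 0 & pK K (3 * pi / 2) = 0]
    & exists S : set (R * R),
        (forall th, S th -> Jset w th.1 \/ th.1 = pi + w \/ th.1 = 3 * pi / 2) /\
        K = \bigcap_(th in S) halfplane th.1 th.2].

Definition upper_boundary (w : R) (K : set pt) : set pt :=
  \bigcup_(t in `[0, w + pi / 2]%classic) edge K t.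

Definition fan (w : R) : set pt :=
  [set p | 0 <= p.2 /\ 0 <= p.1 * cos w + p.2 * sin w].

Definition xK (K : set pt) (t : R) : pt :=
  ((pK K t - 1) * (u_ t).1 + (pK K (t + pi / 2) - 1) * (v_ t).1,
   (pK K t - 1) * (u_ t).2 + (pK K (t + pi / 2) - 1) * (v_ t).2).

Definition QKminus (K : set pt) (t : R) : set pt :=
  [set p | dotp p (u_ t) < pK K t - 1 /\ dotp p (v_ t) < pK K (t + pi / 2) - 1].

Definition niche (w : R) (K : set pt) : set pt :=
  fan w `&` \bigcup_(t in `[0, w]%classic) QKminus K t.

End Cap.

(* Write [x_t] for [xK K t], the apex of the quadrant [Q_t = QKminus K t].  On the
   fan, each half-plane cutting out [K] at an angle [s] of [J_w] is implied by the
   bound in direction [u_t] when [s < t], by the bound in direction [v_t] when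
   [s > t + pi/2], and by domination in both directions otherwise.  Hence the niche
   points of [Q_t] lie in [K] as soon as [x_t] does, and [x_t] lies in [K] as soon
   as some point of [K] dominates it.  Conditions (2) and (3) then follow from small
   perturbations inside the niche, and (4) from a separation of [K \ niche] along
   [Q_t] on one side and a decomposition into vertical segments on the other. *)

From HB Require Import structures.
From mathcomp Require Import all_boot all_order all_algebra.
From mathcomp Require Import all_classical all_reals all_analysis.
From mathcomp Require Import ring lra.
Import Order.TTheory GRing.Theory Num.Theory numFieldNormedType.Exports.
Local Open Scope classical_set_scope.
Local Open Scope ring_scope.

Set Implicit Arguments.
Unset Strict Implicit.
Unset Printing Implicit Defensive.

Section PlaneGeometry.
Variable R : realType.
Implicit Types (p q r z : R * R) (s t w : R).

Lemma exists_pos_lt2 (a b : R) : 0 < a -> 0 < b -> exists2 e, 0 < e & e < a /\ e < b.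
Proof.
move=> a0 b0; exists (Num.min a b / 2); first by rewrite divr_gt0 // lt_min a0 b0.
have : Num.min a b <= a by rewrite ge_min lexx.
have : Num.min a b <= b by rewrite ge_min lexx orbT.
have : 0 < Num.min a b by rewrite lt_min a0 b0.
lra.
Qed.

Lemma dotp_uE p t : dotp p (u_ t) = p.1 * cos t + p.2 * sin t.
Proof. by []. Qed.

Lemma dotp_vE p t : dotp p (v_ t) = - p.1 * sin t + p.2 * cos t.
Proof. by rewrite /dotp /= mulrN mulNr. Qed.

Lemma dotp_uDpihalf p t : dotp p (u_ (t + pi / 2)) = dotp p (v_ t).
Proof. by rewrite dotp_uE dotp_vE cosDpihalf sinDpihalf; lra. Qed.

Lemma dotp_u_rot p t s :
  dotp p (u_ s) = dotp p (u_ t) * cos (s - t) + dotp p (v_ t) * sin (s - t).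
Proof.
rewrite !dotp_uE dotp_vE cosB sinB.
transitivity ((p.1 * cos s + p.2 * sin s) * (cos t ^+ 2 + sin t ^+ 2)).
  by rewrite cos2Dsin2 mulr1.
ring.
Qed.

Lemma dotp_upiD p t : dotp p (u_ (pi + t)) = - dotp p (u_ t).
Proof. by rewrite !dotp_uE (addrC pi) cosDpi sinDpi; lra. Qed.

Lemma dotp_u3pihalf p : dotp p (u_ (3 * pi / 2)) = - p.2.
Proof.
rewrite (_ : 3 * pi / 2 = pi + pi / 2); last by field.
by rewrite dotp_upiD dotp_uE cos_pihalf sin_pihalf; lra.
Qed.

Lemma fanP w z : fan w z <-> 0 <= z.2 /\ 0 <= dotp z (u_ w).
Proof. by []. Qed.

Definition shiftp p d (e : R) : R * R := (p.1 + e * d.1, p.2 + e * d.2).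

Lemma dotp_shiftp p d e q : dotp (shiftp p d e) q = dotp p q + e * dotp d q.
Proof. rewrite /dotp /=; ring. Qed.

Lemma dotp_u_u s t : dotp (u_ s) (u_ t) = cos (s - t).
Proof. by rewrite cosB. Qed.

Lemma dotp_u_v s t : dotp (u_ s) (v_ t) = sin (s - t).
Proof. by rewrite dotp_vE sinB /=; ring. Qed.

Lemma ler_dotp_quadrant r z t s :
  dotp r (u_ t) <= dotp z (u_ t) -> dotp r (v_ t) <= dotp z (v_ t) ->
  t <= s <= t + pi / 2 -> dotp r (u_ s) <= dotp z (u_ s).
Proof.
move=> ru rv /andP[ts st]; have := pi_gt0 R => pi0.
have c0 : 0 <= cos (s - t) by apply: cos_ge0_pihalf; apply/andP; split; lra.
have s0 : 0 <= sin (s - t) by apply: sin_ge0_pi; apply/andP; split; lra.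
by rewrite (dotp_u_rot r t) (dotp_u_rot z t); apply: lerD; apply: ler_wpM2r.
Qed.

Lemma ltr_dotp_quadrant r z t s :
  dotp r (u_ t) < dotp z (u_ t) -> dotp r (v_ t) < dotp z (v_ t) ->
  t <= s <= t + pi / 2 -> dotp r (u_ s) < dotp z (u_ s).
Proof.
move=> ru rv /andP[ts st]; have := pi_gt0 R => pi0.
have c0 : 0 <= cos (s - t) by apply: cos_ge0_pihalf; apply/andP; split; lra.
have s0 : 0 <= sin (s - t) by apply: sin_ge0_pi; apply/andP; split; lra.
rewrite (dotp_u_rot r t) (dotp_u_rot z t).
have [c_pos|c_le0] := ltP 0 (cos (s - t)).
  have : 0 < (dotp z (u_ t) - dotp r (u_ t)) * cos (s - t).
    by apply: mulr_gt0; rewrite // subr_gt0.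
  have : 0 <= (dotp z (v_ t) - dotp r (v_ t)) * sin (s - t).
    by apply: mulr_ge0; rewrite // subr_ge0 ltW.
  lra.
have c00 : cos (s - t) = 0 by apply/eqP; rewrite eq_le c_le0 c0.
have s_pos : 0 < sin (s - t) by have := cos2Dsin2 (s - t); rewrite c00; nra.
have : 0 < (dotp z (v_ t) - dotp r (v_ t)) * sin (s - t).
  by apply: mulr_gt0; rewrite // subr_gt0.
rewrite c00 !mulr0; lra.
Qed.

Lemma continuous_dotp q : continuous (fun p : R * R => dotp p q).
Proof.
move=> p; apply: cvgD; (apply: cvgM; last exact: cvg_cst).
  exact: cvg_fst.
exact: cvg_snd.
Qed.

Lemma interior_fanP w z :
  interior (fan w) z <-> 0 < z.2 /\ 0 < dotp z (u_ w).
Proof.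
have cw := cos_max w; have sw := sin_max w.
rewrite ler_norml in cw; rewrite ler_norml in sw.
split.
  move=> /nbhs_ballP [e /= e0 sub].
  have /sub/fanP[/= z2 _] : ball z e (z.1, z.2 - e / 2).
    by split; rewrite /ball /= ltr_norml; apply/andP; split; lra.
  have /sub/fanP[_] : ball z e (shiftp z (u_ w) (- (e / 2))).
    by split; rewrite /ball /= ltr_norml; apply/andP; split; nra.
  by rewrite dotp_shiftp dotp_u_u subrr cos0 mulr1 => zw; split; lra.
move=> [z2 zw]; apply/nbhs_ballP.
exists (Num.min z.2 (dotp z (u_ w) / 2)) => /=; first by rewrite lt_min z2; lra.
move=> y [/= + +]; rewrite /ball /= !lt_min !ltr_norml => /andP[/andP[a1 a2] /andP[a3 a4]].
move=> /andP[/andP[b1 b2] /andP[b3 b4]]; split; first lra.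
by move: zw a3 a4 b3 b4; rewrite /dotp /=; nra.
Qed.

Lemma closed_mem_approx (A : set (R * R)) z : closed A ->
  (forall e, 0 < e -> exists2 y, A y & `|z.1 - y.1| < e /\ `|z.2 - y.2| < e) ->
  A z.
Proof.
move=> /closure_id Acl near_z; rewrite Acl => B /nbhs_ballP [e e0 sub].
by have [y Ay [h1 h2]] := near_z e e0; exists y; split; last by apply: sub.
Qed.

End PlaneGeometry.

Section SupportFunction.
Variables (R : realType) (K : set (R * R)).
Hypotheses (K0 : K !=set0) (Kcompact : compact K).

Let maximizer t : exists2 c, K c & forall q, K q -> dotp q (u_ t) <= dotp c (u_ t).
Proof.
have [c Kc cmax] :=
  compact_EVT_max K0 Kcompact (continuous_subspaceT (continuous_dotp (q := u_ t))).
by rewrite inE in Kc; exists c => // q Kq; apply: cmax; rewrite inE.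
Qed.

Let pK_maximizer t c : K c -> (forall q, K q -> dotp q (u_ t) <= dotp c (u_ t)) ->
  pK K t = dotp c (u_ t).
Proof.
move=> Kc cmax; apply/eqP; rewrite eq_le; apply/andP; split.
  by apply: ge_sup; [exists (dotp c (u_ t)), c | move=> _ [q Kq <-]; apply: cmax].
by apply: ub_le_sup; [exists (dotp c (u_ t)) => _ [q Kq <-]; apply: cmax | exists c].
Qed.

Lemma pK_attained t : exists2 c, K c & dotp c (u_ t) = pK K t.
Proof. by have [c Kc cmax] := maximizer t; exists c => //; rewrite (pK_maximizer Kc cmax). Qed.

Lemma le_pK t q : K q -> dotp q (u_ t) <= pK K t.
Proof. by have [c Kc cmax] := maximizer t; rewrite (pK_maximizer Kc cmax); apply: cmax. Qed.

End SupportFunction.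

Lemma graph_continuous_within (R : realType) (A : set R) (f : R -> R) :
  (forall x, A x -> forall e, 0 < e -> exists2 d, 0 < d &
     forall y, A y -> `|x - y| < d -> `|f x - f y| < e) ->
  {within A, continuous (fun x => (x, f x))}.
Proof.
move=> f_cont; rewrite continuous_subspace_in => x; rewrite inE => Ax.
rewrite /continuous_at; have [_|//] := nbhs_subspaceP A x.
apply/(@cvg_ballP _ _ _ (within A (nbhs x))) => e e0.
have [d d0 fd] := f_cont x Ax e e0.
apply/nbhs_ballP; exists (Num.min d e) => /=; first by rewrite lt_min d0 e0.
move=> y; rewrite /ball /= lt_min => /andP[yd ye] Ay.
by split => //; apply: fd.
Qed.

Section ConvexColumns.
Variables (R : realType) (K : set (R * R)).
Hypotheses (Kclosed : closed K) (Kconvex : convex2 K).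
Hypothesis Kstrip : forall q, K q -> 0 <= q.2 <= 1.

Definition column_sup x := sup [set y | K (x, y)].

Lemma column_sup_ge x y : K (x, y) -> y <= column_sup x.
Proof.
move=> Kxy; apply: ub_le_sup => //.
by exists 1 => y' Ky'; have /andP[] := Kstrip Ky'.
Qed.

Lemma column_sup_mem x : (fst @` K) x -> K (x, column_sup x).
Proof.
move=> [[x' y0] Ky0 /= <-]; apply: closed_mem_approx Kclosed _ => e e0.
have col_sup : has_sup [set y | K (x', y)].
  by split; [exists y0 | exists 1 => y Ky; have /andP[] := Kstrip Ky].
have [y Ky ey] := sup_adherent e0 col_sup.
exists (x', y) => //; rewrite /= subrr normr0; split => //.
have := column_sup_ge Ky; rewrite /column_sup in ey * => yle.
by rewrite ger0_norm; lra.
Qed.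

Lemma column_sup_bounds x : (fst @` K) x -> 0 <= column_sup x <= 1.
Proof.
move=> Kx; have /Kstrip/andP[-> _] := column_sup_mem Kx.
have [[x' y] Ky /= xE] := Kx; apply: ge_sup; first by exists y; rewrite -xE.
by move=> y' Ky'; have /andP[] := Kstrip Ky'.
Qed.

Lemma column_sup_concave x1 x2 l : (fst @` K) x1 -> (fst @` K) x2 -> 0 <= l <= 1 ->
  (1 - l) * column_sup x1 + l * column_sup x2 <= column_sup ((1 - l) * x1 + l * x2).
Proof.
move=> K1 K2 hl; apply: column_sup_ge.
exact: Kconvex (column_sup_mem K1) (column_sup_mem K2) hl.
Qed.

Lemma is_interval_fst_image : is_interval (fst @` K).
Proof.
move=> x y [[x' a] Ka /= <-] [[y' b] Kb /= <-] z /andP[xz zy].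
have [exy|nxy] := eqVneq x' y'.
  have -> : z = x' by apply/eqP; rewrite eq_le xz andbT exy.
  by exists (x', a).
have xy : x' < y' by rewrite lt_neqAle nxy (le_trans xz zy).
pose l := (z - x') / (y' - x').
have hl : 0 <= l <= 1.
  by rewrite /l; apply/andP; split; [rewrite divr_ge0 //; lra | rewrite ler_pdivrMr ?mul1r; lra].
exists ((1 - l) * x' + l * y', (1 - l) * a + l * b); first exact: Kconvex Ka Kb hl.
by rewrite /= /l; field; lra.
Qed.

Lemma column_segment q y : K q -> q.2 <= y <= column_sup q.1 -> K (q.1, y).
Proof.
case: q => x y0 Kq /= /andP[y0y ys].
have [<-|ne] := eqVneq y0 y; first by [].
have gt : y0 < column_sup x by rewrite (lt_le_trans _ ys) // lt_neqAle ne.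
pose l := (y - y0) / (column_sup x - y0).
have hl : 0 <= l <= 1.
  by rewrite /l; apply/andP; split; [rewrite divr_ge0 //; lra | rewrite ler_pdivrMr ?mul1r; lra].
have := Kconvex Kq (column_sup_mem (ex_intro2 _ _ (x, y0) Kq erefl)) hl.
rewrite /= (_ : (1 - l) * x + l * x = x); last by ring.
by rewrite (_ : (1 - l) * y0 + l * column_sup x = y) // /l; field; lra.
Qed.

(* Chords from [(x0, column_sup x0)] to higher column tops at nearby [x] pass
   arbitrarily close to [(x0, column_sup x0 + e)], which would then lie in the
   closed set [K]. *)
Lemma column_sup_usc x0 e : (fst @` K) x0 -> 0 < e -> exists2 d, 0 < d &
  forall x, (fst @` K) x -> `|x0 - x| < d -> column_sup x < column_sup x0 + e.
Proof.
move=> Kx0 e0; apply: contrapT => no_d.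
have far d : 0 < d -> exists x,
    [/\ (fst @` K) x, `|x0 - x| < d & column_sup x0 + e <= column_sup x].
  move=> d0; apply: contrapT => nx; apply: no_d; exists d => // x Kx xd.
  by rewrite ltNge; apply/negP => ge; apply: nx; exists x.
suff /column_sup_ge : K (x0, column_sup x0 + e) by lra.
apply: closed_mem_approx Kclosed _ => r r0.
have [x [Kx xr ge]] := far r r0.
pose l := e / (column_sup x - column_sup x0).
have hl : 0 <= l <= 1.
  by rewrite /l; apply/andP; split; [rewrite divr_ge0 //; lra | rewrite ler_pdivrMr ?mul1r; lra].
exists ((1 - l) * x0 + l * x, (1 - l) * column_sup x0 + l * column_sup x).
  exact: Kconvex (column_sup_mem Kx0) (column_sup_mem Kx) hl.
rewrite /= (_ : x0 - _ = l * (x0 - x)); last by ring.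
rewrite (_ : column_sup x0 + e - _ = 0); last by rewrite /l; field; lra.
rewrite normr0 normrM (ger0_norm (proj1 (andP hl))); split => //.
by apply: le_lt_trans xr; rewrite ler_piMl // (proj2 (andP hl)).
Qed.

(* By concavity, [column_sup] lies above the chord from [x0] towards [a], which
   drops by at most [l] since [0 <= column_sup <= 1]. *)
Lemma column_sup_near_anchor x0 a e x : (fst @` K) x0 -> (fst @` K) a -> a != x0 ->
  (fst @` K) x -> 0 <= (x - x0) / (a - x0) < Num.min e 1 ->
  column_sup x0 - e < column_sup x.
Proof.
move=> Kx0 Ka ax0 Kx; set l := (x - x0) / (a - x0) => /andP[l0 le].
have [le_e le1] : l < e /\ l < 1 by move: le; rewrite lt_min => /andP[].
have hl : 0 <= l <= 1 by apply/andP; split; lra.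
have := column_sup_concave Kx0 Ka hl.
rewrite (_ : (1 - l) * x0 + l * a = x); last by rewrite /l; field; rewrite subr_eq0.
have /andP[s0 s1] := column_sup_bounds Kx0; have /andP[a0 a1] := column_sup_bounds Ka.
nra.
Qed.

Lemma column_sup_lsc x0 e : (fst @` K) x0 -> 0 < e -> exists2 d, 0 < d &
  forall x, (fst @` K) x -> `|x0 - x| < d -> column_sup x0 - e < column_sup x.
Proof.
move=> Kx0 e0; have m0 : 0 < Num.min e 1 by rewrite lt_min e0 ltr01.
have [dR dR0 right] : exists2 d, 0 < d & forall x, (fst @` K) x -> x0 < x ->
    `|x0 - x| < d -> column_sup x0 - e < column_sup x.
  have [[a Ka ax]|none] := pselect (exists2 a, (fst @` K) a & x0 < a); last first.
    by exists 1 => // x Kx xx; exfalso; apply: none; exists x.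
  exists (Num.min e 1 * (a - x0)) => [|x Kx xx]; first by rewrite mulr_gt0 // subr_gt0.
  rewrite distrC gtr0_norm ?subr_gt0 // => xd.
  apply: column_sup_near_anchor Kx0 Ka (negbT (gt_eqF ax)) Kx _.
  by rewrite divr_ge0 ?subr_ge0 ?ltW //= ltr_pdivrMr ?subr_gt0.
have [dL dL0 left] : exists2 d, 0 < d & forall x, (fst @` K) x -> x < x0 ->
    `|x0 - x| < d -> column_sup x0 - e < column_sup x.
  have [[a Ka ax]|none] := pselect (exists2 a, (fst @` K) a & a < x0); last first.
    by exists 1 => // x Kx xx; exfalso; apply: none; exists x.
  exists (Num.min e 1 * (x0 - a)) => [|x Kx xx]; first by rewrite mulr_gt0 // subr_gt0.
  rewrite gtr0_norm ?subr_gt0 // => xd.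
  apply: column_sup_near_anchor Kx0 Ka (negbT (lt_eqF ax)) Kx _.
  rewrite -mulrNN -invrN !opprB.
  by rewrite divr_ge0 ?subr_ge0 ?ltW //= ltr_pdivrMr ?subr_gt0.
exists (Num.min dR dL) => [|x Kx]; first by rewrite lt_min dR0 dL0.
rewrite lt_min => /andP[xR xL].
have [xx|xx|<-] := ltgtP x0 x; [exact: right | exact: left | lra].
Qed.

Lemma column_sup_continuous x : (fst @` K) x -> forall e, 0 < e -> exists2 d, 0 < d &
  forall y, (fst @` K) y -> `|x - y| < d -> `|column_sup x - column_sup y| < e.
Proof.
move=> Kx e e0.
have [d1 d10 upper] := column_sup_usc Kx e0; have [d2 d20 lower] := column_sup_lsc Kx e0.
exists (Num.min d1 d2) => [|y Ky]; first by rewrite lt_min d10 d20.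
rewrite lt_min => /andP[yd1 yd2].
by have := upper y Ky yd1; have := lower y Ky yd2; rewrite ltr_norml; lra.
Qed.

Lemma connected_column_sup_graph :
  connected ((fun x => (x, column_sup x)) @` (fst @` K)).
Proof.
apply: connected_continuous_connected.
  exact/connected_intervalP/is_interval_fst_image.
exact/graph_continuous_within/column_sup_continuous.
Qed.

End ConvexColumns.

Section Cap.
Variables (R : realType) (w : R) (K : set (R * R)).
Hypotheses (hw : 0 < w <= pi / 2) (hK : is_cap w K).

Let K0 : K !=set0. Proof. by case: hK. Qed.
Let Kcompact : compact K. Proof. by case: hK. Qed.
Let support_attained := pK_attained K0 Kcompact.
Let support_ub := le_pK K0 Kcompact.

Lemma cap_closed : closed K.
Proof. exact: compact_closed (@norm_hausdorff _ _) Kcompact. Qed.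

Lemma cap_convex : convex2 K.
Proof. by case: hK. Qed.

Lemma cap_ybounds q : K q -> 0 <= q.2 <= 1.
Proof.
move=> Kq; case: hK => _ _ _ [_ pK_top _ pK_bot] _.
have := support_ub (pi / 2) Kq; have := support_ub (3 * pi / 2) Kq.
by rewrite pK_top pK_bot dotp_u3pihalf dotp_uE cos_pihalf sin_pihalf; lra.
Qed.

Lemma cap_uw_bounds q : K q -> 0 <= dotp q (u_ w) <= 1.
Proof.
move=> Kq; case: hK => _ _ _ [pK_w _ pK_piw _] _.
by have := support_ub w Kq; have := support_ub (pi + w) Kq; rewrite pK_w pK_piw dotp_upiD; lra.
Qed.

Lemma cap_sub_fan : K `<=` fan w.
Proof. by move=> q Kq; apply/fanP; have := cap_ybounds Kq; have := cap_uw_bounds Kq; lra. Qed.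

(* The half-planes of [K] at the angles [pi + w] and [3 pi / 2] are those of the fan. *)
Lemma mem_cap z : fan w z -> (forall s, Jset w s -> dotp z (u_ s) <= pK K s) -> K z.
Proof.
move=> /fanP[z2 zw] zJ; case: hK => _ _ _ [_ _ pK_piw pK_bot] [S [Sangles KS]].
rewrite KS => th Sth; rewrite /halfplane /=.
have pK_le : pK K th.1 <= th.2.
  by have [c + <-] := support_attained th.1; rewrite {1}KS => /(_ th Sth).
apply: le_trans pK_le.
case: (Sangles th Sth) => [/zJ //|[-> | ->]].
  by rewrite pK_piw dotp_upiD; lra.
by rewrite pK_bot dotp_u3pihalf; lra.
Qed.

Lemma dotp_xK_u t : dotp (xK K t) (u_ t) = pK K t - 1.
Proof.
rewrite /dotp /xK /=.
by rewrite -[RHS]mulr1 -(cos2Dsin2 t); ring.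
Qed.

Lemma dotp_xK_v t : dotp (xK K t) (v_ t) = pK K (t + pi / 2) - 1.
Proof.
rewrite /dotp /xK /=.
by rewrite -[RHS]mulr1 -(cos2Dsin2 t); ring.
Qed.

Lemma niche_param_range t p : 0 <= t <= w -> fan w p -> QKminus K t p -> 0 < t < w.
Proof.
move=> /andP[t0 tw] /fanP[p2 pw] [pu pv].
case: hK => _ _ _ [pK_w pK_top _ _] _.
rewrite !lt_neqAle t0 tw !andbT; apply/andP; split; apply/eqP => tE.
  by move: pv; rewrite -tE add0r pK_top dotp_vE sin0 cos0; lra.
by move: pu; rewrite tE pK_w; lra.
Qed.

Lemma xK_interior_fan t p : 0 <= t <= w -> fan w p -> QKminus K t p ->
  interior (fan w) (xK K t).
Proof.
move=> ht Fp Qp; have /andP[t0 tw] := niche_param_range ht Fp Qp.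
move: Fp Qp => /fanP[p2 pw] [pu pv].
have := pi_gt0 R; case/andP: hw => w0 wp pi0.
rewrite -dotp_xK_u in pu; rewrite -dotp_xK_v in pv.
apply/interior_fanP; split.
  have := ltr_dotp_quadrant pu pv (_ : t <= pi / 2 <= t + pi / 2).
  by rewrite !dotp_uE cos_pihalf sin_pihalf; lra.
by have := ltr_dotp_quadrant pu pv (_ : t <= w <= t + pi / 2); lra.
Qed.

(* [u_t] is a nonnegative combination of [u_s] and [u_w], and [K] lies below 1
   in direction [u_w]. *)
Lemma le_pK_before t s r : 0 < t < w -> 0 <= s < t -> fan w r ->
  dotp r (u_ t) <= pK K t - 1 -> dotp r (u_ s) <= pK K s.
Proof.
move=> /andP[t0 tw] /andP[s0 st] /fanP[r2 rw] rt.
have pi0 := pi_gt0 R; case/andP: hw => w0 wp.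
have combine z : sin (w - s) * dotp z (u_ t) =
    sin (w - t) * dotp z (u_ s) + sin (t - s) * dotp z (u_ w).
  by rewrite !dotp_uE !sinB; ring.
have [c Kc ct] := support_attained t.
have sws : 0 <= sin (w - s) by apply: sin_ge0_pi; apply/andP; split; lra.
have swt : 0 < sin (w - t) by apply: sin_gt0_pi; apply/andP; split; lra.
have sts : 0 <= sin (t - s) by apply: sin_ge0_pi; apply/andP; split; lra.
have sts_le : sin (t - s) <= sin (w - s).
  by apply/ltW; rewrite ltr_sin ?in_itv /=; try (apply/andP; split); lra.
have /andP[_ cw] := cap_uw_bounds Kc.
have P1 : sin (w - t) * dotp c (u_ s) <= sin (w - t) * pK K s.
  by rewrite ler_pM2l // support_ub.
have P2 : sin (t - s) * dotp c (u_ w) <= sin (t - s) by rewrite ler_piMr.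
have P3 : 0 <= sin (t - s) * dotp r (u_ w) by rewrite mulr_ge0.
have P4 : sin (w - s) * dotp r (u_ t) <= sin (w - s) * (dotp c (u_ t) - 1).
  by rewrite ler_wpM2l // ct.
have := combine r; have := combine c.
rewrite -(ler_pM2l swt); lra.
Qed.

(* [- v_t] is a nonnegative combination of [u_s] and [- u_(pi/2)], and [K] lies
   below the line [y = 1]. *)
Lemma le_pK_after t s r : 0 < t < w -> t + pi / 2 < s <= pi / 2 + w -> fan w r ->
  dotp r (v_ t) <= pK K (t + pi / 2) - 1 -> dotp r (u_ s) <= pK K s.
Proof.
move=> /andP[t0 tw] /andP[ts sw] /fanP[r2 rw] rt.
have pi0 := pi_gt0 R; case/andP: hw => w0 wp.
have combine z : - cos s * dotp z (v_ t) = - cos (s - t) * z.2 + sin t * dotp z (u_ s).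
  by rewrite dotp_uE dotp_vE cosB; ring.
have [c Kc] := support_attained (t + pi / 2); rewrite dotp_uDpihalf => ct.
have cos_s_le0 y : pi / 2 <= y <= pi -> cos y <= 0.
  move=> /andP[y1 y2]; apply: (@le_trans _ _ (cos (pi / 2))); last by rewrite cos_pihalf.
  have [->|lt_y] := eqVneq y (pi / 2); first by [].
  by apply/ltW; rewrite ltr_cos ?in_itv /=; try (apply/andP; split); lra.
have cs : 0 <= - cos s by rewrite oppr_ge0 cos_s_le0 //; apply/andP; split; lra.
have cst : 0 <= - cos (s - t) by rewrite oppr_ge0 cos_s_le0 //; apply/andP; split; lra.
have cst_le : - cos (s - t) <= - cos s.
  by rewrite lerN2; apply/ltW; rewrite ltr_cos ?in_itv /=; try (apply/andP; split); lra.
have st : 0 < sin t by apply: sin_gt0_pi; apply/andP; split; lra.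
have /andP[_ c2] := cap_ybounds Kc.
have P1 : sin t * dotp c (u_ s) <= sin t * pK K s by rewrite ler_pM2l // support_ub.
have P2 : - cos (s - t) * c.2 <= - cos (s - t) by rewrite ler_piMr.
have P3 : 0 <= - cos (s - t) * r.2 by rewrite mulr_ge0.
have P4 : - cos s * dotp r (v_ t) <= - cos s * (dotp c (v_ t) - 1).
  by rewrite ler_wpM2l // ct.
have := combine r; have := combine c.
rewrite -(ler_pM2l st); lra.
Qed.

Lemma mem_cap_dominated t z q : 0 < t < w -> fan w z ->
  dotp z (u_ t) <= pK K t - 1 -> dotp z (v_ t) <= pK K (t + pi / 2) - 1 ->
  K q -> dotp z (u_ t) <= dotp q (u_ t) -> dotp z (v_ t) <= dotp q (v_ t) -> K z.
Proof.
move=> ht Fz zt zt' Kq qt qt'; apply: mem_cap => // s Js.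
have pi0 := pi_gt0 R; case/andP: hw => w0 wp; case/andP: ht => t0 tw.
have /andP[s0 s1] : 0 <= s <= pi / 2 + w.
  by case: Js => /=; rewrite in_itv /= => /andP[]; lra.
have [st|ts] := ltP s t.
  by apply: (le_pK_before _ _ Fz zt); apply/andP; split; lra.
have [ts'|st'] := ltP (t + pi / 2) s.
  by apply: (le_pK_after _ _ Fz zt'); apply/andP; split; lra.
apply: le_trans (support_ub s Kq).
by apply: ler_dotp_quadrant qt qt' _; rewrite ts st'.
Qed.

Lemma niche_mem_of_xK t p : 0 <= t <= w -> fan w p -> QKminus K t p ->
  K (xK K t) -> K p.
Proof.
move=> ht Fp Qp Kx; have t_range := niche_param_range ht Fp Qp.
case: Qp => pt pt'.
by apply: (mem_cap_dominated t_range Fp _ _ Kx); rewrite ?dotp_xK_u ?dotp_xK_v ltW.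
Qed.

Lemma xK_mem_of_corner t p q : 0 <= t <= w -> fan w p -> QKminus K t p -> K q ->
  pK K t - 1 <= dotp q (u_ t) -> pK K (t + pi / 2) - 1 <= dotp q (v_ t) ->
  K (xK K t).
Proof.
move=> ht Fp Qp Kq qt qt'; have t_range := niche_param_range ht Fp Qp.
have Fx := interior_subset (xK_interior_fan ht Fp Qp).
by apply: (mem_cap_dominated t_range Fx _ _ Kq); rewrite ?dotp_xK_u ?dotp_xK_v.
Qed.

Lemma cap_right_point : exists2 y, K y &
  forall t, 0 <= t <= pi / 2 -> pK K t - 1 <= dotp y (u_ t).
Proof.
have [y Ky y_max] := support_attained 0; exists y => // t /andP[t0 t1].
have pi0 := pi_gt0 R; have [z Kz <-] := support_attained t.
have := support_ub 0 Kz; rewrite -y_max !dotp_uE cos0 sin0 => zy.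
have c0 : 0 <= cos t by apply: cos_ge0_pihalf; apply/andP; split; lra.
have s0 : 0 <= sin t by apply: sin_ge0_pi; apply/andP; split; lra.
have s1 := sin_le1 t.
have /andP[z0 z1] := cap_ybounds Kz; have /andP[y0 y1] := cap_ybounds Ky.
have : cos t * (z.1 - y.1) <= 0 by rewrite mulr_ge0_le0 //; lra.
have : sin t * (z.2 - y.2) <= 1 by nra.
lra.
Qed.

Lemma cap_left_point : exists2 y, K y &
  forall t, 0 <= t <= w -> pK K (t + pi / 2) - 1 <= dotp y (v_ t).
Proof.
have [y Ky] := support_attained (w + pi / 2); rewrite dotp_uDpihalf => yw.
exists y => // t /andP[t0 t1].
have pi0 := pi_gt0 R; case/andP: hw => w0 wp.
have [z Kz] := support_attained (t + pi / 2); rewrite dotp_uDpihalf => <-.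
have := support_ub (w + pi / 2) Kz; rewrite -yw dotp_uDpihalf => zy.
have rotate p : dotp p (v_ t) =
    cos (w - t) * dotp p (v_ w) + sin (w - t) * dotp p (u_ w).
  rewrite !dotp_uE !dotp_vE cosB sinB.
  by rewrite -[LHS]mulr1 -(cos2Dsin2 w); ring.
have c0 : 0 <= cos (w - t) by apply: cos_ge0_pihalf; apply/andP; split; lra.
have s0 : 0 <= sin (w - t) by apply: sin_ge0_pi; apply/andP; split; lra.
have s1 := sin_le1 (w - t).
have /andP[z0 z1] := cap_uw_bounds Kz; have /andP[y0 y1] := cap_uw_bounds Ky.
have : cos (w - t) * (dotp z (v_ w) - dotp y (v_ w)) <= 0.
  by rewrite mulr_ge0_le0 //; lra.
have : sin (w - t) * (dotp z (u_ w) - dotp y (u_ w)) <= 1 by nra.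
rewrite !rotate; lra.
Qed.

Lemma niche_shift s p : 0 <= s <= w + pi / 2 -> niche w K p ->
  exists2 e, 0 < e & niche w K (shiftp p (u_ s) e).
Proof.
move=> /andP[s0 s1] [/fanP[p2 pw] [t /= ht [pu pv]]].
have pi0 := pi_gt0 R; case/andP: hw => w0 wp.
move: (ht); rewrite in_itv /= => /andP[t0 t1].
have [e e0 [e1 e2]] : exists2 e, 0 < e &
    e < pK K t - 1 - dotp p (u_ t) /\ e < pK K (t + pi / 2) - 1 - dotp p (v_ t).
  by apply: exists_pos_lt2; rewrite subr_gt0.
exists e => //; split.
  apply/fanP; rewrite dotp_shiftp dotp_u_u /=.
  split; apply: addr_ge0 => //; apply: mulr_ge0 (ltW e0) _.
    by apply: sin_ge0_pi; apply/andP; split; lra.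
  by apply: cos_ge0_pihalf; apply/andP; split; lra.
exists t => //; rewrite /QKminus /= !dotp_shiftp dotp_u_u dotp_u_v.
have := ler_piMr (ltW e0) (cos_le1 (s - t)); have := ler_piMr (ltW e0) (sin_le1 (s - t)).
by split; lra.
Qed.

Lemma niche_sub_cap_iff_avoids_boundary :
  niche w K `<=` K <-> niche w K `<=` K `\` upper_boundary w K.
Proof.
split=> [NK p Np | NK p /NK[] //]; split; first exact: NK.
move=> [s /= hs [_ ps]]; rewrite in_itv /= in hs.
have [e e0 /NK /(support_ub s)] := niche_shift hs Np.
by rewrite dotp_shiftp dotp_u_u subrr cos0 mulr1 ps; lra.
Qed.

(* Points of the niche approach [xK K t] from inside [Q_K^-(t)] along [- (u_t + v_t)]. *)
Lemma xK_mem_of_niche_sub t : niche w K `<=` K -> 0 <= t <= w ->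
  interior (fan w) (xK K t) -> K (xK K t).
Proof.
move=> NK ht /interior_fanP[].
move: (xK K t) (dotp_xK_u t) (dotp_xK_v t) => x xu xv x2 xw.
apply: closed_mem_approx cap_closed _ => r r0.
pose d : R * R := (sin t - cos t, - (sin t + cos t)).
have d_ut : dotp d (u_ t) = -1 by rewrite /dotp /= -(cos2Dsin2 t); ring.
have d_vt : dotp d (v_ t) = -1 by rewrite /dotp /= -(cos2Dsin2 t); ring.
have d_uw : -2 <= dotp d (u_ w).
  have -> : dotp d (u_ w) = - (cos (t - w) + sin (w - t)).
    by rewrite cosB sinB /dotp /=; ring.
  by have := cos_le1 (t - w); have := sin_le1 (w - t); lra.
have [ct st] := (cos_max t, sin_max t); rewrite !ler_norml in ct st.
have [e0 e1 [e2 e3]] :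
    exists2 e, 0 < e & e < x.2 / 2 /\ e < Num.min (dotp x (u_ w)) r / 2.
  by apply: exists_pos_lt2; rewrite ?divr_gt0 ?lt_min ?x2 ?xw.
have mw : Num.min (dotp x (u_ w)) r <= dotp x (u_ w) by rewrite ge_min lexx.
have mr : Num.min (dotp x (u_ w)) r <= r by rewrite ge_min lexx orbT.
exists (shiftp x d e0).
  have Fz : fan w (shiftp x d e0).
    have d2 : e0 * (sin t + cos t) <= e0 * 2 by rewrite ler_pM2l //; lra.
    have duw : e0 * (-2) <= e0 * dotp d (u_ w) by rewrite ler_pM2l.
    by apply/fanP; rewrite dotp_shiftp /= mulrN; split; lra.
  apply: NK; split => //; exists t; first by rewrite /= in_itv /=.
  by rewrite /QKminus /= !dotp_shiftp d_ut d_vt xu xv; split; lra.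
have close (a da : R) : `|da| <= 2 -> `|a - (a + e0 * da)| < r.
  move=> hda; rewrite opprD addrA subrr add0r normrN normrM (gtr0_norm e1).
  by have := ler_wpM2l (ltW e1) hda; lra.
by split; apply: close; rewrite ler_norml /=; lra.
Qed.

Lemma niche_sub_cap_iff_corners : niche w K `<=` K <->
  (forall t, 0 <= t <= w -> ~ interior (fan w) (xK K t) \/ K (xK K t)).
Proof.
split=> [NK t ht | corners p [Fp [t /= ht Qp]]].
  have [/(xK_mem_of_niche_sub NK ht)|] := pselect (interior (fan w) (xK K t)).
    by right.
  by left.
rewrite in_itv /= in ht; apply: (niche_mem_of_xK ht Fp Qp).
by case: (corners t ht) => // /(_ (xK_interior_fan ht Fp Qp)).
Qed.

(* If [p] is in the niche but not in [K], then [xK K t] is not in [K], and the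
   closed condition [pK K t - 1 <= r . u_t] agrees on [K \ niche] with the open
   condition [r . v_t < pK K (t + pi/2) - 1]; the extreme points of [K] in the
   directions [u_0] and [u_(w + pi/2)] fall on different sides. *)
Lemma niche_sub_cap_of_connected : connected (K `\` niche w K) -> niche w K `<=` K.
Proof.
move=> connC p Np; apply: contrapT => nKp.
have [Fp [t /= ht Qp]] := Np; rewrite in_itv /= in ht.
have nKx : ~ K (xK K t) by move/(niche_mem_of_xK ht Fp Qp).
have pi0 := pi_gt0 R; case/andP: hw => w0 wp; case/andP: (ht) => t0 t1.
have [yR KyR yR_ge] := cap_right_point; have [yL KyL yL_ge] := cap_left_point.
set C := K `\` niche w K.
have sides r : C r ->
    pK K t - 1 <= dotp r (u_ t) <-> dotp r (v_ t) < pK K (t + pi / 2) - 1.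
  move=> [Kr nNr]; split=> [rt | rt'].
    by rewrite ltNge; apply/negP => /(xK_mem_of_corner ht Fp Qp Kr rt).
  rewrite leNgt; apply/negP => rt; apply: nNr; split; first exact: cap_sub_fan.
  by exists t; [rewrite /= in_itv /= t0 t1 | split].
have CyR : C yR.
  by split=> // -[_ [s /= hs [+ _]]]; rewrite in_itv /= in hs; rewrite ltNge yR_ge //; lra.
have CyL : C yL by split=> // -[_ [s /= hs [_]]]; rewrite ltNge yL_ge.
have C_u : C `&` [set r | pK K t - 1 <= dotp r (u_ t)] = C.
  apply: connC.
  - by exists yR; split; [|apply: yR_ge; lra].
  - exists ((fun r => dotp r (v_ t)) @^-1` [set a | a < pK K (t + pi / 2) - 1]).
      by apply: open_comp; [move=> r _; exact: continuous_dotp | exact: open_lt].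
    by apply/seteqP; split=> r [Cr rt]; split=> //; apply/(sides r Cr).
  - exists ((fun r => dotp r (u_ t)) @^-1` [set a | pK K t - 1 <= a]) => //.
    by apply: preimage_closed; [move=> r _; exact: continuous_dotp | exact: closed_ge].
have [_ yLt] : (C `&` [set r | pK K t - 1 <= dotp r (u_ t)]) yL by rewrite C_u.
exact/nKx/(xK_mem_of_corner ht Fp Qp KyL yLt)/yL_ge.
Qed.

Lemma niche_of_above q y : fan w q -> q.2 <= y -> niche w K (q.1, y) -> niche w K q.
Proof.
move=> Fq qy [_ [t /= ht [pu pv]]]; split=> //; exists t => //.
move: (ht); rewrite in_itv /= => /andP[t0 t1].
have pi0 := pi_gt0 R; case/andP: hw => w0 wp.
have s0 : 0 <= sin t by apply: sin_ge0_pi; apply/andP; split; lra.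
have c0 : 0 <= cos t by apply: cos_ge0_pihalf; apply/andP; split; lra.
have : q.2 * sin t <= y * sin t by rewrite ler_wpM2r.
have : q.2 * cos t <= y * cos t by rewrite ler_wpM2r.
by move: pu pv; rewrite /QKminus /dotp /=; split; lra.
Qed.

Lemma column_sup_not_niche x : niche w K `<=` K -> (fst @` K) x ->
  ~ niche w K (x, column_sup K x).
Proof.
move=> NK Kx; have pi0 := pi_gt0 R; case/andP: hw => w0 _.
move=> /(niche_shift (s := pi / 2)) [|e e0 /NK /(column_sup_ge cap_ybounds)].
  by apply/andP; split; lra.
by rewrite /shiftp /= cos_pihalf sin_pihalf mulr0 addr0 mulr1; lra.
Qed.

(* [K \ niche] is the union of the vertical segments from its points up to the
   upper graph of [K], which is connected and disjoint from the niche. *)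
Lemma connected_capD_niche : niche w K `<=` K -> connected (K `\` niche w K).
Proof.
move=> NK; set C := K `\` niche w K.
pose G := (fun x => (x, column_sup K x)) @` (fst @` K).
pose seg (q : R * R) := (fun y => (q.1, y)) @` `[q.2, column_sup K q.1].
have below_top q : K q -> q.2 <= column_sup K q.1.
  by case: q => x y /(column_sup_ge cap_ybounds).
have GC : G `<=` C.
  move=> _ [x Kx <-]; split; last exact: column_sup_not_niche.
  exact: column_sup_mem cap_closed cap_ybounds _ Kx.
have segC q : C q -> seg q `<=` C.
  move=> [Kq nNq] _ [y /= /[!in_itv] /= /andP[qy yq] <-]; split.
    by apply: (column_segment cap_closed cap_convex cap_ybounds Kq); rewrite qy yq.
  by move/(niche_of_above (cap_sub_fan Kq) qy).
have -> : C = \bigcup_(q in C) (seg q `|` G).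
  apply/seteqP; split=> [q Cq | z [q Cq [/(segC q Cq) // | /GC //]]].
  exists q => //; left; exists q.2; last by case: q Cq.
  by rewrite /= in_itv /= lexx below_top //; case: Cq.
have [q0 Kq0] := K0.
apply: bigcup_connected.
  by exists (q0.1, column_sup K q0.1) => q _; right; exists q0.1 => //; exists q0.
move=> q [Kq _]; apply: connectedU.
- exists (q.1, column_sup K q.1); split; last by exists q.1 => //; exists q.
  by exists (column_sup K q.1); rewrite //= in_itv /= lexx below_top.
- apply: connected_continuous_connected; first exact: segment_connected.
  apply: continuous_subspaceT => y; apply/cvg_ballP => e e0.
  by apply/nbhs_ballP; exists e => // z yz; split; rewrite /ball //= subrr normr0.
- exact: connected_column_sup_graph cap_closed cap_convex cap_ybounds.
Qed.

End Cap.

Unset Implicit Arguments.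

Theorem theorem3p24 (R : realType) (w : R) (K : set (R * R)) :
  0 < w <= pi / 2 -> is_cap w K ->
  [/\ (niche w K `<=` K <-> niche w K `<=` K `\` upper_boundary w K),
      (niche w K `<=` K <->
         (forall t : R, 0 <= t <= w ->
            ~ (interior (fan w)) (xK K t) \/ K (xK K t)))
    & (niche w K `<=` K <-> connected (K `\` niche w K))].
Proof.
move=> hw hK; split.
- exact: niche_sub_cap_iff_avoids_boundary.
- exact: niche_sub_cap_iff_corners.
- split; [exact: connected_capD_niche | exact: niche_sub_cap_of_connected].
Qed.
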